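(* The floor function is not definable in $Q_0(\mathbf s)$: there is no $\Sigma_{ms}$-term $t(x)$ with only variable $x$ such that $t(q)=\lfloor q\rfloor$ for all rationals $q$ (evaluated in $Q_0(\mathbf s)$), where $\lfloor q\rfloor=\max\{n\in\mathbb Z\mid n\le q\}$.
   Context: $\Sigma_m=(0,1,+,\cdot,-,{}^{-1})$ and $\Sigma_{ms}=\Sigma_m$ extended with a unary symbol $\mathbf s$. $Q_0$ is the field of rational numbers with the total inverse $q^{-1}=1/q$ for $q\neq0$, $0^{-1}=0$. $Q_0(\mathbf s)$ is $Q_0$ expanded with the sign function $\mathbf s(q)=-1$ if $q<0$, $0$ if $q=0$, $1$ if $q>0$. *)

From mathcomp Require Import all_boot all_order all_algebra.
Set Implicit Arguments. Unset Strict Implicit. Unset Printing Implicit Defensive.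
Import Order.TTheory GRing.Theory Num.Theory.
Local Open Scope ring_scope.

Inductive msterm : Type :=
| TVar : msterm
| TZero : msterm
| TOne : msterm
| TAdd : msterm -> msterm -> msterm
| TMul : msterm -> msterm -> msterm
| TOpp : msterm -> msterm
| TInv : msterm -> msterm
| TSgn : msterm -> msterm.

Definition inv0 (q : rat) : rat := if q == 0 then 0 else q^-1.

Definition sgn (q : rat) : rat := if q < 0 then -1 else if q == 0 then 0 else 1.

Fixpoint eval_ms (t : msterm) (q : rat) : rat :=
  match t with
  | TVar => q
  | TZero => 0
  | TOne => 1
  | TAdd a b => eval_ms a q + eval_ms b q
  | TMul a b => eval_ms a q * eval_ms b q
  | TOpp a => - eval_ms a q
  | TInv a => inv0 (eval_ms a q)
  | TSgn a => sgn (eval_ms a q)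
  end.

Definition is_floor (q r : rat) : Prop :=
  exists z : int, r = z%:~R /\ z%:~R <= q /\ forall n : int, n%:~R <= q -> n <= z.

From Pilot Require Import Defs.
From mathcomp Require Import all_boot all_order all_algebra.
Set Implicit Arguments. Unset Strict Implicit. Unset Printing Implicit Defensive.
Import Order.TTheory GRing.Theory Num.Theory.
Local Open Scope ring_scope.

(* Idea: every term function agrees, for all sufficiently large q, with a
   rational function P(q)/Q(q) whose denominator does not vanish there.  This
   is proved by induction on terms: rational functions are closed under
   +, *, -, and the total inverse, and the sign of a nonzero rational function
   is eventually constant, because a nonzero polynomial eventually has the sign
   of its leading coefficient.  On the other hand the floor function is not
   eventually rational: if floor = P/Q beyond some bound, then for every
   c in [0, 1) the polynomial identity P(y + c) = y Q(y + c) holds at all large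
   naturals y, hence everywhere; comparing c = 0 and c = 1/2 forces Q to vanish
   at a large point, a contradiction. *)

Definition eventually (P : rat -> Prop) : Prop := exists M, forall q, M < q -> P q.

Lemma eventually_mono (P1 P2 : rat -> Prop) :
  eventually P1 -> (forall q, P1 q -> P2 q) -> eventually P2.
Proof. by move=> [M HM] P12; exists M => q /HM /P12. Qed.

Lemma eventuallyI (P1 P2 : rat -> Prop) :
  eventually P1 -> eventually P2 -> eventually (fun q => P1 q /\ P2 q).
Proof.
move=> [M1 H1] [M2 H2]; exists (Num.max M1 M2) => q.
by rewrite gt_max => /andP[/H1 ? /H2 ?].
Qed.

Lemma eventually_gt (M : rat) : eventually (fun q => M < q).
Proof. by exists M. Qed.

Lemma eventually_at_nat (P : rat -> Prop) : eventually P -> exists n : nat, P n%:R.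
Proof.
move=> [M HM]; exists (Num.Def.archi_bound `|M|); apply: HM.
exact: le_lt_trans (ler_norm M) (archi_boundP (normr_ge0 M)).
Qed.

Lemma inv0E (q : rat) : Defs.inv0 q = q^-1.
Proof. by rewrite /Defs.inv0; case: eqP => [->|]; rewrite ?invr0. Qed.

Lemma sgnE (q : rat) : sgn q = Num.sg q.
Proof.
rewrite /sgn; case: (ltrgt0P q) => [q_gt0|q_lt0|->]; rewrite ?sgr0 //.
- by rewrite gtr0_sg // gt_eqF.
- by rewrite ltr0_sg.
Qed.

Lemma poly_eventually_pos (P : {poly rat}) : 0 < lead_coef P ->
  exists2 e, 0 < e & eventually (fun q => e <= P.[q]).
Proof.
elim/poly_ind: P => [|p c IH]; first by rewrite lead_coef0 ltxx.
have [->|p_neq0] := eqVneq p 0.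
  rewrite mul0r add0r lead_coefC => c_gt0; exists c => //; exists 0 => q _.
  by rewrite hornerC.
have lc_pXc : lead_coef (p * 'X + c%:P) = lead_coef p.
  rewrite lead_coefDl ?lead_coefMX // size_mulX //.
  by rewrite (leq_ltn_trans (size_polyC_leq1 c)) // ltnS lt0n size_poly_eq0.
rewrite lc_pXc => /IH [e e_gt0 ev_p]; exists e => //.
have ev_large := eventually_gt (Num.max 0 (1 - c / e)).
apply: (eventually_mono (eventuallyI ev_p ev_large)) => q [ep_q].
rewrite gt_max => /andP[q_gt0 q_large]; rewrite hornerMXaddC -lerBlDr.
have lower_bound : e * q <= p.[q] * q by rewrite ler_wpM2r // ltW.
have e_c_lt : e - c < e * q.
  move: q_large; rewrite -(ltr_pM2l e_gt0) mulrBr mulr1 mulrCA divff ?mulr1 //.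
  by rewrite gt_eqF.
exact: le_trans (ltW e_c_lt) lower_bound.
Qed.

Lemma poly_eventually_sg (P : {poly rat}) : P != 0 ->
  eventually (fun q => Num.sg P.[q] = Num.sg (lead_coef P)).
Proof.
rewrite -lead_coef_eq0; case: (ltrgt0P (lead_coef P)) => // [lc_gt0|lc_lt0] _.
  have [e e_gt0 ev] := poly_eventually_pos lc_gt0.
  apply: (eventually_mono ev) => q e_le.
  by rewrite (gtr0_sg lc_gt0) gtr0_sg // (lt_le_trans e_gt0).
have : 0 < lead_coef (- P) by rewrite lead_coefN oppr_gt0.
move=> /poly_eventually_pos [e e_gt0 ev]; apply: (eventually_mono ev) => q.
rewrite hornerN lerNr => le_e.
by rewrite (ltr0_sg lc_lt0) ltr0_sg // (le_lt_trans le_e) // oppr_lt0.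
Qed.

Lemma poly_eventually_neq0 (P : {poly rat}) : P != 0 -> eventually (fun q => P.[q] != 0).
Proof.
move=> P_neq0; apply: (eventually_mono (poly_eventually_sg P_neq0)) => q sgP.
by rewrite -sgr_eq0 sgP sgr_eq0 lead_coef_eq0.
Qed.

Lemma poly_eq0_at_large_nat (A : {poly rat}) (M : rat) :
  (forall n : nat, M < n%:R -> A.[n%:R] = 0) -> A = 0.
Proof.
move=> A_nat; apply/eqP/negPn/negP => A_neq0.
have [n [M_lt An_neq0]] :=
  eventually_at_nat (eventuallyI (eventually_gt M) (poly_eventually_neq0 A_neq0)).
by rewrite A_nat ?eqxx in An_neq0.
Qed.

Definition ev_rational (f : rat -> rat) : Prop :=
  exists P Q : {poly rat}, eventually (fun q => Q.[q] != 0 /\ f q = P.[q] / Q.[q]).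

Lemma ev_rational_const (f : rat -> rat) (c : rat) :
  eventually (fun q => f q = c) -> ev_rational f.
Proof.
move=> ev; exists c%:P, 1; apply: (eventually_mono ev) => q ->.
by rewrite !hornerC divr1 oner_neq0.
Qed.

Lemma ev_rational_id : ev_rational id.
Proof. by exists 'X, 1; exists 0 => q _; rewrite hornerX hornerC divr1 oner_neq0. Qed.

Lemma ev_rationalD (f g : rat -> rat) :
  ev_rational f -> ev_rational g -> ev_rational (fun q => f q + g q).
Proof.
move=> [P1 [Q1 ev1]] [P2 [Q2 ev2]]; exists (P1 * Q2 + P2 * Q1), (Q1 * Q2).
apply: (eventually_mono (eventuallyI ev1 ev2)) => q [[Q1q ->] [Q2q ->]].
by rewrite hornerD !hornerM mulf_neq0 // addf_div.
Qed.

Lemma ev_rationalM (f g : rat -> rat) :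
  ev_rational f -> ev_rational g -> ev_rational (fun q => f q * g q).
Proof.
move=> [P1 [Q1 ev1]] [P2 [Q2 ev2]]; exists (P1 * P2), (Q1 * Q2).
apply: (eventually_mono (eventuallyI ev1 ev2)) => q [[Q1q ->] [Q2q ->]].
by rewrite !hornerM mulf_neq0 // mulf_div.
Qed.

Lemma ev_rationalN (f : rat -> rat) : ev_rational f -> ev_rational (fun q => - f q).
Proof.
move=> [P [Q ev]]; exists (- P), Q; apply: (eventually_mono ev) => q [Qq ->].
by rewrite hornerN mulNr.
Qed.

(* Inversion swaps numerator and denominator; a zero numerator gives 0^-1 = 0. *)
Lemma ev_rationalV (f : rat -> rat) : ev_rational f -> ev_rational (fun q => Defs.inv0 (f q)).
Proof.
move=> [P [Q ev]]; have [P0|P_neq0] := eqVneq P 0.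
  apply: (@ev_rational_const _ 0); apply: (eventually_mono ev) => q [_ ->].
  by rewrite P0 horner0 mul0r inv0E invr0.
exists Q, P; apply: (eventually_mono (eventuallyI ev (poly_eventually_neq0 P_neq0))).
by move=> q [[Qq ->] Pq]; rewrite inv0E invf_div.
Qed.

(* The sign of an eventually rational function is eventually constant. *)
Lemma ev_rational_sgn (f : rat -> rat) : ev_rational f -> ev_rational (fun q => sgn (f q)).
Proof.
move=> [P [Q ev]]; have [P0|P_neq0] := eqVneq P 0.
  apply: (@ev_rational_const _ 0); apply: (eventually_mono ev) => q [_ ->].
  by rewrite P0 horner0 mul0r sgnE sgr0.
have Q_neq0 : Q != 0.
  have [n [Qn _]] := eventually_at_nat ev.
  by apply: contraNneq Qn => ->; rewrite horner0.
apply: (@ev_rational_const _ (Num.sg (lead_coef P) * Num.sg (lead_coef Q))).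
have ev_sg := eventuallyI (poly_eventually_sg P_neq0) (poly_eventually_sg Q_neq0).
apply: (eventually_mono (eventuallyI ev ev_sg)) => q [[_ ->] [sgP sgQ]].
by rewrite sgnE sgrM sgrV sgP sgQ.
Qed.

Lemma eval_ms_ev_rational (t : msterm) : ev_rational (eval_ms t).
Proof.
elim: t => /= [|||a IHa b IHb|a IHa b IHb|a IHa|a IHa|a IHa].
- exact: ev_rational_id.
- by apply: (@ev_rational_const _ 0); exists 0.
- by apply: (@ev_rational_const _ 1); exists 0.
- exact: ev_rationalD.
- exact: ev_rationalM.
- exact: ev_rationalN.
- exact: ev_rationalV.
- exact: ev_rational_sgn.
Qed.

Lemma is_floor_int_add (n : int) (c r : rat) :
  0 <= c -> c < 1 -> is_floor (n%:~R + c) r -> r = n%:~R.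
Proof.
move=> c_ge0 c_lt1 [z [-> [z_le maxz]]].
have n_le_z : n <= z by apply: maxz; rewrite lerDl.
have z_le_n : z <= n.
  by rewrite -ltzD1 -(ltr_int rat) intrD (le_lt_trans z_le) // ltrD2l.
by rewrite (@le_anti _ _ z n) ?n_le_z ?z_le_n.
Qed.

(* If floor is eventually P/Q then P(y + c) = y Q(y + c) for all y and all
   c in [0, 1): the difference is a polynomial vanishing at large naturals. *)
Lemma floor_ev_rational_identity (f : rat -> rat) (P Q : {poly rat}) (c : rat) :
  (forall q, is_floor q (f q)) ->
  eventually (fun q => Q.[q] != 0 /\ f q = P.[q] / Q.[q]) ->
  0 <= c -> c < 1 -> forall y, P.[y + c] = y * Q.[y + c].
Proof.
move=> floor_f [M ev] c_ge0 c_lt1 y.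
pose A := P \Po ('X + c%:P) - 'X * (Q \Po ('X + c%:P)).
have AE z : A.[z] = P.[z + c] - z * Q.[z + c].
  by rewrite /A hornerD hornerN hornerM hornerX !horner_comp hornerD hornerX hornerC.
suff A0 : A = 0 by apply/eqP; rewrite -subr_eq0 -AE A0 horner0.
apply: (poly_eq0_at_large_nat (M := M)) => n M_lt_n.
have [Qn_neq0 fnE] : Q.[n%:R + c] != 0 /\ f (n%:R + c) = P.[n%:R + c] / Q.[n%:R + c].
  by apply: ev; apply: lt_le_trans M_lt_n _; rewrite lerDl.
have fn : f (n%:R + c) = n%:R := is_floor_int_add (n := n) c_ge0 c_lt1 (floor_f _).
by rewrite AE -[X in X * _]fn fnE divfK // subrr.
Qed.

(* The floor function is not eventually rational: the identities for c = 0
   and c = 1/2 at the point q - 1/2 give Q(q) / 2 = 0 for a large q. *)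
Lemma floor_not_ev_rational (f : rat -> rat) :
  (forall q, is_floor q (f q)) -> ~ ev_rational f.
Proof.
move=> floor_f [P [Q ev]].
have [n [Qn_neq0 _]] := eventually_at_nat ev.
have idt0 := floor_ev_rational_identity floor_f ev (lexx 0) ltr01 n%:R.
have idt_half := floor_ev_rational_identity floor_f ev
  (c := 2^-1) ltac:(by rewrite invr_ge0 ler0n) ltac:(by rewrite invf_lt1 // ltr1n)
  (n%:R - 2^-1).
rewrite addr0 in idt0; rewrite subrK idt0 mulrBl in idt_half.
move/eqP: idt_half; rewrite -subr_eq0 opprB addrC subrK mulf_eq0 (negbTE Qn_neq0) orbF.
by rewrite invr_eq0 pnatr_eq0.
Qed.

Theorem corollary5 : ~ exists t : msterm, forall q : rat, is_floor q (eval_ms t q).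
Proof.
move=> [t floor_t].
exact: floor_not_ev_rational floor_t (eval_ms_ev_rational t).
Qed.
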